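(* Let $K$ be a multiplicative Lie algebra and $p:K\to K/\mathcal Z(K)$ the natural projection, $p'=p|_{{}^M[K,K]}$. Then there exists a homomorphism $\Delta:\tilde M(K/\mathcal Z(K))\to{}^M[K,K]$ such that the sequence $$1\to\ker\Delta\to\tilde M(K/\mathcal Z(K))\xrightarrow{\Delta}{}^M[K,K]\xrightarrow{p'}{}^M\big[K/\mathcal Z(K),K/\mathcal Z(K)\big]\to1$$ is exact.
   Context: A multiplicative Lie algebra is a group $(G,\cdot)$ with a binary operation $\star$ such that for all $x,y,z\in G$: $x\star x=1$; $x\star(yz)=(x\star y)\,{}^y(x\star z)$; $(xy)\star z={}^x(y\star z)(x\star z)$; $((x\star y)\star{}^yz)((y\star z)\star{}^zx)((z\star x)\star{}^xy)=1$; ${}^z(x\star y)={}^zx\star{}^zy$, where ${}^xy=xyx^{-1}$. $Z(G)$ is the group center, $LZ(G)=\{x: x\star y=1\ \forall y\}$, $\mathcal Z(G)=LZ(G)\cap Z(G)$; $[x,y]$ is the group commutator. For ideals $A,B$ of $G$, ${}^M[A,B]=(A\star B)[A,B]$, where $A\star B$ is generated by all $a\star b$ ($a\in A,b\in B$); in particular ${}^M[G,G]=(G\star G)[G,G]$. The Schur multiplier of a multiplicative Lie algebra $Q$ is $\tilde M(Q)=({}^M[F,F]\cap R)/{}^M[R,F]$ for any free presentation $1\to R\to F\to Q\to1$ ($F$ a free multiplicative Lie algebra); it is independent of the presentation up to isomorphism. *)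

Record MLA := {
  car :> Type;
  mul : car -> car -> car;
  one : car;
  inv : car -> car;
  star : car -> car -> car;
  mulA : forall x y z, mul x (mul y z) = mul (mul x y) z;
  mul1x : forall x, mul one x = x;
  mulVx : forall x, mul (inv x) x = one;
  (* conjugation  ^x y = x y x^-1 is written  mul (mul x y) (inv x) *)
  star_xx : forall x, star x x = one;
  star_xM : forall x y z,
    star x (mul y z) = mul (star x y) (mul (mul y (star x z)) (inv y));
  star_Mx : forall x y z,
    star (mul x y) z = mul (mul (mul x (star y z)) (inv x)) (star x z);
  star_jacobi : forall x y z,
    mul (mul (star (star x y) (mul (mul y z) (inv y)))
             (star (star y z) (mul (mul z x) (inv z))))
        (star (star z x) (mul (mul x y) (inv x))) = one;
  star_conj : forall x y z,
    mul (mul z (star x y)) (inv z) =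
    star (mul (mul z x) (inv z)) (mul (mul z y) (inv z))
}.

Arguments mul {m}.
Arguments one {m}.
Arguments inv {m}.
Arguments star {m}.

Definition conj {G : MLA} (x y : G) : G := mul (mul x y) (inv x).

Definition commg {G : MLA} (x y : G) : G := mul (mul (mul x y) (inv x)) (inv y).

Definition setT {G : MLA} : G -> Prop := fun _ => True.

Definition is_subgroup {G : MLA} (H : G -> Prop) : Prop :=
  H one /\ (forall x y, H x -> H y -> H (mul x y)) /\ (forall x, H x -> H (inv x)).

Definition gen {G : MLA} (S : G -> Prop) : G -> Prop :=
  fun x => forall H : G -> Prop, is_subgroup H -> (forall y, S y -> H y) -> H x.

Definition star_sub {G : MLA} (A B : G -> Prop) : G -> Prop :=
  gen (fun x => exists a b, A a /\ B b /\ x = star a b).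

Definition comm_sub {G : MLA} (A B : G -> Prop) : G -> Prop :=
  gen (fun x => exists a b, A a /\ B b /\ x = commg a b).

Definition Mcomm {G : MLA} (A B : G -> Prop) : G -> Prop :=
  fun x => exists u v, star_sub A B u /\ comm_sub A B v /\ x = mul u v.

Definition Zcenter {G : MLA} : G -> Prop := fun x => forall y, mul x y = mul y x.
Definition LZ {G : MLA} : G -> Prop := fun x => forall y, star x y = one.
Definition calZ {G : MLA} : G -> Prop := fun x => LZ x /\ Zcenter x.

Definition mla_hom {G H : MLA} (f : G -> H) : Prop :=
  forall x y, f (mul x y) = mul (f x) (f y) /\ f (star x y) = star (f x) (f y).

Definition is_free_mla {X : Type} {F : MLA} (i : X -> F) : Prop :=
  forall (L : MLA) (f : X -> L),
    exists g : F -> L, mla_hom g /\ (forall x, g (i x) = f x) /\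
      forall g' : F -> L, mla_hom g' -> (forall x, g' (i x) = f x) ->
        forall y, g' y = g y.

(* A free multiplicative Lie algebra is projective, so the presentation map
   pi : F -> K/calZ(K) lifts along p to a homomorphism g : F -> K, and Delta is
   induced by g.  Since g maps R into calZ(K), on which both the star product
   and the group commutator vanish, g kills ^M[R,F].  Moreover
   K = g(F) calZ(K), and the generators a * b and [a,b] of ^M[K,K] are
   unchanged when a or b is multiplied by an element of calZ(K); hence
   ^M[K,K] = g(^M[F,F]), which yields exactness at ^M[K,K].  The same argument
   applied to the surjection p shows that p' is onto. *)

From Stdlib Require Import IndefiniteDescription.

Section GroupLaws.
Variable G : MLA.
Implicit Types a b x y z : G.

Lemma mulxV x : mul x (inv x) = one.
Proof.
  rewrite <- (mul1x G (mul x (inv x))), <- (mulVx G (inv x)), <- mulA.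
  rewrite (mulA G (inv x) x (inv x)), mulVx, mul1x. reflexivity.
Qed.

Lemma mulx1 x : mul x one = x.
Proof. rewrite <- (mulVx G x), mulA, mulxV. apply mul1x. Qed.

Lemma mulI a x y : mul a x = mul a y -> x = y.
Proof.
  intro E. rewrite <- (mul1x G x), <- (mul1x G y), <- (mulVx G a), <- !mulA, E.
  reflexivity.
Qed.

Lemma mul_idem_one x : mul x x = x -> x = one.
Proof. intro E. apply (mulI x). rewrite mulx1. exact E. Qed.

Lemma inv_unique a b : mul a b = one -> a = inv b.
Proof. intro E. rewrite <- (mulx1 a), <- (mulxV b), mulA, E. apply mul1x. Qed.

Lemma inv_one : inv (@one G) = one.
Proof. symmetry. apply inv_unique, mul1x. Qed.

Lemma inv_mul x y : inv (mul x y) = mul (inv y) (inv x).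
Proof.
  symmetry. apply inv_unique.
  rewrite <- mulA, (mulA G (inv x)), mulVx, mul1x. apply mulVx.
Qed.

Lemma star_1x x : star one x = one.
Proof.
  apply mul_idem_one. pose proof (star_Mx G one one x) as E.
  rewrite !mul1x, inv_one, mulx1 in E. symmetry. exact E.
Qed.

(* Expand [star (x y) (x y) = 1] with both distributivity laws. *)
Lemma star_anti x y : mul (star y x) (star x y) = one.
Proof.
  pose proof (star_xx G (mul x y)) as E.
  rewrite star_Mx, (star_xM G y x y), star_xx, mulx1, mulxV, mulx1 in E.
  rewrite (star_xM G x x y), star_xx, mul1x, <- !mulA in E.
  rewrite (mulA G (inv x) x), mulVx, mul1x in E.
  transitivity (mul (mul (inv x) (mul x (mul (mul (star y x) (star x y)) (inv x)))) x).
  - rewrite !mulA, (mulVx G x), mul1x, <- mulA, mulVx, mulx1. reflexivity.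
  - rewrite <- (mulA G (star y x)), E, mulx1. apply mulVx.
Qed.

Lemma star_LZ_r x z : LZ z -> star x z = one.
Proof. intro Hz. pose proof (star_anti x z) as E. rewrite Hz, mul1x in E. exact E. Qed.

Lemma star_mulLZ_l a b z : LZ z -> star (mul a z) b = star a b.
Proof. intro Hz. rewrite star_Mx, Hz, mulx1, mulxV, mul1x. reflexivity. Qed.

Lemma star_mulLZ_r a b z : LZ z -> star a (mul b z) = star a b.
Proof.
  intro Hz. rewrite star_xM, (star_LZ_r a z Hz), mulx1, mulxV, mulx1. reflexivity.
Qed.

Lemma commg_Zcenter_l z b : Zcenter z -> commg z b = one.
Proof.
  intro Hz. unfold commg. rewrite Hz, <- (mulA G b z), mulxV, mulx1. apply mulxV.
Qed.

Lemma commg_mulZ_l a b z : Zcenter z -> commg (mul a z) b = commg a b.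
Proof.
  intro Hz. unfold commg. rewrite inv_mul, <- (mulA G a z b), Hz, (mulA G a b z).
  rewrite <- (mulA G (mul a b) z), (mulA G z (inv z)), mulxV, mul1x. reflexivity.
Qed.

Lemma commg_mulZ_r a b z : Zcenter z -> commg a (mul b z) = commg a b.
Proof.
  intro Hz. unfold commg. rewrite inv_mul, (mulA G a b z).
  rewrite <- (mulA G (mul a b) z (inv a)), Hz, (mulA G (mul a b) (inv a) z).
  rewrite <- (mulA G (mul (mul a b) (inv a)) z), (mulA G z (inv z)), mulxV, mul1x.
  reflexivity.
Qed.

Lemma calZ_one : calZ (@one G).
Proof.
  split; intro y.
  - apply star_1x.
  - rewrite mul1x, mulx1. reflexivity.
Qed.

End GroupLaws.

Section Subgroups.
Variable G : MLA.

Lemma trivial_subgroup : is_subgroup (fun x : G => x = one).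
Proof.
  split; [reflexivity | split].
  - intros x y -> ->. apply mul1x.
  - intros x ->. apply inv_one.
Qed.

Lemma gen_subgroup (S : G -> Prop) : is_subgroup (gen S).
Proof.
  split; [| split].
  - intros H [H1 _] _. exact H1.
  - intros x y Hx Hy H HH HS. apply HH; [apply Hx | apply Hy]; assumption.
  - intros x Hx H HH HS. apply HH, Hx; assumption.
Qed.

Lemma gen_in (S : G -> Prop) x : S x -> gen S x.
Proof. intros Sx H _ HS. auto. Qed.

Lemma Mcomm_calZ_l (B : G -> Prop) x : Mcomm calZ B x -> x = one.
Proof.
  intros [u [v [Hu [Hv ->]]]].
  rewrite (Hu _ trivial_subgroup), (Hv _ trivial_subgroup).
  - apply mul1x.
  - intros y [z [b [[_ Cz] [_ ->]]]]. apply commg_Zcenter_l, Cz.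
  - intros y [z [b [[Lz _] [_ ->]]]]. apply Lz.
Qed.

End Subgroups.

Section Homomorphisms.
Variables G H : MLA.
Variable h : G -> H.
Hypothesis hh : mla_hom h.

Lemma hom_mul x y : h (mul x y) = mul (h x) (h y).
Proof. apply hh. Qed.

Lemma hom_star x y : h (star x y) = star (h x) (h y).
Proof. apply hh. Qed.

Lemma hom_one : h one = one.
Proof. apply mul_idem_one. rewrite <- hom_mul, mul1x. reflexivity. Qed.

Lemma hom_inv x : h (inv x) = inv (h x).
Proof. apply inv_unique. rewrite <- hom_mul, mulVx. apply hom_one. Qed.

Lemma hom_commg x y : h (commg x y) = commg (h x) (h y).
Proof. unfold commg. rewrite !hom_mul, !hom_inv. reflexivity. Qed.

Lemma preimage_subgroup (S : H -> Prop) : is_subgroup S -> is_subgroup (fun x => S (h x)).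
Proof.
  intros [S1 [SM SI]]. split; [| split].
  - rewrite hom_one. exact S1.
  - intros x y Sx Sy. rewrite hom_mul. auto.
  - intros x Sx. rewrite hom_inv. auto.
Qed.

Lemma image_subgroup (S : G -> Prop) :
  is_subgroup S -> is_subgroup (fun y => exists x, S x /\ h x = y).
Proof.
  intros [S1 [SM SI]]. split; [| split].
  - exists one. split; [exact S1 | apply hom_one].
  - intros x y [a [Sa <-]] [b [Sb <-]]. exists (mul a b). split; auto. apply hom_mul.
  - intros x [a [Sa <-]]. exists (inv a). split; auto. apply hom_inv.
Qed.

Lemma gen_map (S : G -> Prop) (T : H -> Prop) x :
  (forall s, S s -> T (h s)) -> gen S x -> gen T (h x).
Proof.
  intros hST Sx. apply (Sx (fun x => gen T (h x))).
  - apply preimage_subgroup, gen_subgroup.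
  - intros s Ss. apply gen_in, hST, Ss.
Qed.

Lemma gen_lift (S : G -> Prop) (T : H -> Prop) y :
  (forall t, T t -> exists s, S s /\ h s = t) -> gen T y -> exists x, gen S x /\ h x = y.
Proof.
  intros hTS Ty. apply Ty.
  - apply image_subgroup, gen_subgroup.
  - intros t Tt. destruct (hTS t Tt) as [s [Ss <-]].
    exists s. split; [apply gen_in, Ss | reflexivity].
Qed.

Lemma Mcomm_map (A B : G -> Prop) (A' B' : H -> Prop) x :
  (forall a, A a -> A' (h a)) -> (forall b, B b -> B' (h b)) ->
  Mcomm A B x -> Mcomm A' B' (h x).
Proof.
  intros hA hB [u [v [Hu [Hv ->]]]]. exists (h u), (h v). split; [| split].
  - revert Hu. apply gen_map. intros s [a [b [Aa [Bb ->]]]].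
    exists (h a), (h b). rewrite hom_star. auto.
  - revert Hv. apply gen_map. intros s [a [b [Aa [Bb ->]]]].
    exists (h a), (h b). rewrite hom_commg. auto.
  - apply hom_mul.
Qed.

Lemma hom_Mcomm x : Mcomm setT setT x -> Mcomm setT setT (h x).
Proof. apply Mcomm_map; intros; exact I. Qed.

Definition onto_mod_calZ : Prop := forall y : H, exists x z, calZ z /\ y = mul (h x) z.

Hypothesis h_onto : onto_mod_calZ.

Lemma Mcomm_lift y : Mcomm setT setT y -> exists x, Mcomm setT setT x /\ h x = y.
Proof.
  intros [u [v [Hu [Hv ->]]]].
  assert (Ha : exists a, star_sub setT setT a /\ h a = u).
  { revert Hu. apply gen_lift. intros t [y1 [y2 [_ [_ ->]]]].
    destruct (h_onto y1) as [x1 [z1 [[L1 _] ->]]].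
    destruct (h_onto y2) as [x2 [z2 [[L2 _] ->]]].
    exists (star x1 x2). split.
    - exists x1, x2. repeat split.
    - rewrite star_mulLZ_l, star_mulLZ_r by assumption. apply hom_star. }
  assert (Hb : exists b, comm_sub setT setT b /\ h b = v).
  { revert Hv. apply gen_lift. intros t [y1 [y2 [_ [_ ->]]]].
    destruct (h_onto y1) as [x1 [z1 [[_ C1] ->]]].
    destruct (h_onto y2) as [x2 [z2 [[_ C2] ->]]].
    exists (commg x1 x2). split.
    - exists x1, x2. repeat split.
    - rewrite commg_mulZ_l, commg_mulZ_r by assumption. apply hom_commg. }
  destruct Ha as [a [Ha <-]], Hb as [b [Hb <-]].
  exists (mul a b). split.
  - exists a, b. auto.
  - apply hom_mul.
Qed.

End Homomorphisms.

Arguments hom_mul {G H h} hh x y.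
Arguments hom_star {G H h} hh x y.
Arguments hom_inv {G H h} hh x.
Arguments hom_Mcomm {G H h} hh x _.
Arguments Mcomm_map {G H h} hh A B A' B' x _ _ _.
Arguments onto_mod_calZ {G H} h.
Arguments Mcomm_lift {G H h} hh h_onto y _.

Lemma hom_comp (G H L : MLA) (f : G -> H) (g : H -> L) :
  mla_hom f -> mla_hom g -> mla_hom (fun x => g (f x)).
Proof.
  intros hf hg x y. rewrite (hom_mul hf), (hom_star hf). apply hg.
Qed.

Lemma surj_onto_mod_calZ (G H : MLA) (h : G -> H) :
  (forall y, exists x, h x = y) -> onto_mod_calZ h.
Proof.
  intros hsurj y. destruct (hsurj y) as [x <-].
  exists x, one. split; [apply calZ_one | symmetry; apply mulx1].
Qed.

Lemma free_hom_ext {X : Type} {F L : MLA} (i : X -> F) (f g : F -> L) :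
  is_free_mla i -> mla_hom f -> mla_hom g -> (forall x, f (i x) = g (i x)) ->
  forall y, f y = g y.
Proof.
  intros Ffree hf hg Efg y. destruct (Ffree L (fun x => g (i x))) as [g0 [_ [_ U]]].
  rewrite (U f hf Efg), (U g hg (fun _ => eq_refl)). reflexivity.
Qed.

Lemma free_lift {X : Type} {F K Q : MLA} (i : X -> F) {p : K -> Q} {pi : F -> Q} :
  is_free_mla i -> mla_hom p -> mla_hom pi -> (forall q, exists k, p k = q) ->
  exists g : F -> K, mla_hom g /\ forall f, p (g f) = pi f.
Proof.
  intros Ffree hp hpi psurj.
  destruct (functional_choice (fun x k => p k = pi (i x)) (fun x => psurj (pi (i x))))
    as [k Ek].
  destruct (Ffree K k) as [g [hg [Eg _]]].
  exists g. split; [exact hg |].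
  apply (free_hom_ext i); [exact Ffree | apply hom_comp; assumption | exact hpi |].
  intro x. rewrite Eg. apply Ek.
Qed.

Lemma lift_onto_mod_calZ {F K Q : MLA} {g : F -> K} {p : K -> Q} :
  mla_hom g -> mla_hom p -> (forall q, exists f, p (g f) = q) ->
  (forall k, p k = one <-> calZ k) -> onto_mod_calZ g.
Proof.
  intros hg hp pgsurj pker k. destruct (pgsurj (p k)) as [f Ef].
  exists f, (mul (inv (g f)) k). split.
  - apply pker. rewrite (hom_mul hp), (hom_inv hp), Ef. apply mulVx.
  - rewrite mulA, mulxV, mul1x. reflexivity.
Qed.

Theorem lemma4p13
  (K Q : MLA) (p : K -> Q)
  (* Q together with p is the quotient K / calZ(K) with its natural projection *)
  (hp : mla_hom p) (psurj : forall q : Q, exists k : K, p k = q)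
  (pker : forall k : K, p k = one <-> calZ k)
  (* an arbitrary free presentation 1 -> R -> F -> Q -> 1 of Q *)
  (X : Type) (F : MLA) (i : X -> F) (Ffree : is_free_mla i)
  (pi : F -> Q) (hpi : mla_hom pi) (pisurj : forall q : Q, exists f : F, pi f = q) :
  let R : F -> Prop := fun x => pi x = one in
  (* Schur multiplier  = A / B *)
  let A : F -> Prop := fun x => Mcomm setT setT x /\ R x in
  let B : F -> Prop := Mcomm R setT in
  (* Delta : A / B -> ^M[K,K] is given by delta on A, trivial on B *)
  exists delta : F -> K,
    (forall a b, A a -> A b -> delta (mul a b) = mul (delta a) (delta b)) /\
    (forall b, B b -> delta b = one) /\
    (forall a, A a -> Mcomm setT setT (delta a)) /\
    (* exactness at ^M[K,K] : im Delta = ker p' *)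
    (forall a, A a -> p (delta a) = one) /\
    (forall k : K, Mcomm setT setT k -> p k = one -> exists a, A a /\ delta a = k) /\
    (* p' maps ^M[K,K] onto ^M[Q,Q] (exactness at ^M[Q,Q]) *)
    (forall q : Q, Mcomm setT setT q <-> exists k : K, Mcomm setT setT k /\ p k = q).
Proof.
  intros R A B.
  destruct (free_lift i Ffree hp hpi psurj) as [g [hg pg]].
  assert (g_onto : onto_mod_calZ g).
  { apply (lift_onto_mod_calZ hg hp); [| exact pker].
    intro q. destruct (pisurj q) as [f <-]. exists f. apply pg. }
  exists g. split; [| split; [| split; [| split; [| split]]]].
  - intros a b _ _. apply (hom_mul hg).
  - intros b Bb. apply (Mcomm_calZ_l _ setT).
    apply (Mcomm_map hg R setT); [| trivial | exact Bb].
    intros r Rr. apply pker. rewrite pg. exact Rr.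
  - intros a [Ma _]. apply (hom_Mcomm hg _ Ma).
  - intros a [_ Ra]. rewrite pg. exact Ra.
  - intros k Mk pk. destruct (Mcomm_lift hg g_onto k Mk) as [a [Ma <-]].
    exists a. split; [split; [exact Ma |] | reflexivity].
    unfold R. rewrite <- pg. exact pk.
  - intro q. split.
    + apply (Mcomm_lift hp), surj_onto_mod_calZ, psurj.
    + intros [k [Mk <-]]. apply (hom_Mcomm hp _ Mk).
Qed.
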